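(* There are absolute constants $c_4,c_5,C_6 > 0$ such that for all sufficiently small $a > 0$ the following hold (with $h$ and $G_a$ as in the context). First, $h(e^{2\pi i t}) \in G_a$ for all real $t$ with $|t| \le c_4a$. Second, $|h(e^{2\pi i t})| \le 1-c_5\frac{|t|}{\log^2(a^{-1})}$ for all $t \in [-\frac{1}{2},\frac{1}{2}]\setminus [-C_6a^{1/2},C_6a^{1/2}]$.
   Context: For $a>0$ let $r = a^{-1/2}$ (floor functions omitted, so $r$ is a positive integer). Let $r_* \in \{1,\dots,r\}$ be such that $\sum_{j=1}^{r_*} \frac{1}{\log^2(j+3)}-\sum_{j=r_*+1}^r \frac{1}{\log^2(j+3)} \in [20,21]$. Let $\epsilon_j = +1$ for $1 \le j \le r_*$ and $\epsilon_j = -1$ for $r_*+1 \le j \le r$. Let $\lambda_a>0$ be such that $\sum_{j=1}^r \frac{\lambda_a}{j^2\log^2(j+3)} = 1$ and set $d_j = \frac{\lambda_a}{j^2\log^2(j+3)}$. Define $\widetilde{h}(z) = \widetilde{\lambda}_a\sum_{j=1}^r \epsilon_j d_j z^j$, where $\widetilde{\lambda}_a>0$ is chosen so that $\widetilde{h}(1) = 1$, and $h(z) = (1-a^{10})\widetilde{h}(z)$. Let $\alpha = e^{ia}$, $\beta = e^{-ia}$, and $G_a = \{z \in \mathbb{C} : \arg(\frac{\alpha-z}{z-\beta}) \in (\frac{a}{2},a)\}$ (principal argument). $\log$ is the natural logarithm. *)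

From Stdlib Require Import Reals.
From Coquelicot Require Import Coquelicot.
Open Scope R_scope.

Fixpoint sumR1 (f : nat -> R) (n : nat) : R :=
  match n with O => 0 | S m => sumR1 f m + f (S m) end.

Fixpoint sumC1 (f : nat -> C) (n : nat) : C :=
  match n with O => RtoC 0 | S m => Cplus (sumC1 f m) (f (S m)) end.

Definition r_of (a : R) : nat := Z.to_nat (Int_part (/ sqrt a)).

Definition cexpi (theta : R) : C := (cos theta, sin theta).

(* principal argument Arg w in (-PI, PI] (atan2); Arg 0 := 0 (irrelevant) *)
Definition Arg (w : C) : R :=
  let x := Re w in let y := Im w in
  match Rlt_dec 0 x with
  | left _ => atan (y / x)
  | right _ =>
    match Rlt_dec x 0 with
    | left _ => match Rle_dec 0 y with
                | left _ => atan (y / x) + PI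
                | right _ => atan (y / x) - PI
                end
    | right _ =>
      match Rlt_dec 0 y with
      | left _ => PI / 2
      | right _ => match Rlt_dec y 0 with
                   | left _ => - (PI / 2)
                   | right _ => 0
                   end
      end
    end
  end.

Definition G (a : R) (z : C) : Prop :=
  z <> cexpi (- a) /\ z <> cexpi a /\
  a / 2 < Arg (Cdiv (Cminus (cexpi a) z) (Cminus z (cexpi (- a)))) < a.

Definition eps (rstar j : nat) : R := if Nat.leb j rstar then 1 else -1.

Definition dcoef (lam : R) (j : nat) : R := lam / (INR j ^ 2 * ln (INR j + 3) ^ 2).

Definition htilde (r rstar : nat) (lam tlam : R) (z : C) : C :=
  Cmult (RtoC tlam)
        (sumC1 (fun j => Cmult (RtoC (eps rstar j * dcoef lam j)) (Cpow z j)) r).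

Definition hfun (a : R) (r rstar : nat) (lam tlam : R) (z : C) : C :=
  Cmult (RtoC (1 - a ^ 10)) (htilde r rstar lam tlam z).

From Stdlib Require Import Reals Lra Lia Psatz ZArith.
From Coquelicot Require Import Coquelicot.
Open Scope R_scope.

(* The d_j have
   total mass 1 and the signed mass is P = 1 - 2 N, where N = sum_{j > r_*} d_j. The balance
   condition on r_* forces r_* >= a^(-1/2) / 34, hence N = O(a^{1/2} / log^2 a), and tlam = 1 / P.

   Near th = 0 (|t| <= a / 1000), Taylor expansion with the second moment
   sum_j eps_j d_j j^2 in [20 lam, 21 lam] shows that the trigonometric sum has modulus at most
   P and real part P - O(th^2); so |h| < 1 and Re h >= 1 - a^2 / 250, which puts h in G_a
   because G_a contains every z with 0 < 1 - |z|^2 < 2 (Re z - cos a), and 1 - cos a ~ a^2 / 2.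

   Away from th = 0 (|t| >= C a^{1/2}), some block of indices j of size ~ 1/|t| has
   cos((j - 1) th) <= 3/4 and carries mass >= |t| / (10 log^2 (1/a)). After rotating by
   e^{-i th}, this cancellation against the first coefficient d_1 >= 1/8 lowers the squared
   modulus by >= |t| / (160 log^2 (1/a)), which beats the loss 2 N due to the normalisation. *)

Lemma sumR1_ext f g n :
  (forall j, (1 <= j <= n)%nat -> f j = g j) -> sumR1 f n = sumR1 g n.
Proof.
  induction n as [|n IH]; intros H; simpl; auto.
  rewrite IH by (intros; apply H; lia). rewrite H by lia. reflexivity.
Qed.

Lemma sumR1_le f g n :
  (forall j, (1 <= j <= n)%nat -> f j <= g j) -> sumR1 f n <= sumR1 g n.
Proof.
  induction n as [|n IH]; intros H; simpl; [lra|].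
  assert (sumR1 f n <= sumR1 g n) by (apply IH; intros; apply H; lia).
  assert (f (S n) <= g (S n)) by (apply H; lia).
  lra.
Qed.

Lemma sumR1_plus f g n : sumR1 (fun j => f j + g j) n = sumR1 f n + sumR1 g n.
Proof. induction n; simpl; [lra|]. rewrite IHn; lra. Qed.

Lemma sumR1_minus f g n : sumR1 (fun j => f j - g j) n = sumR1 f n - sumR1 g n.
Proof. induction n; simpl; [lra|]. rewrite IHn; lra. Qed.

Lemma sumR1_scal c f n : sumR1 (fun j => c * f j) n = c * sumR1 f n.
Proof. induction n; simpl; [lra|]. rewrite IHn; lra. Qed.

Lemma sumR1_const c n : sumR1 (fun _ => c) n = INR n * c.
Proof. induction n; cbn [sumR1]; [simpl; lra|]. rewrite IHn, S_INR; lra. Qed.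

Lemma sumR1_nonneg f n :
  (forall j, (1 <= j <= n)%nat -> 0 <= f j) -> 0 <= sumR1 f n.
Proof.
  intros H. rewrite <- (Rmult_0_r (INR n)), <- sumR1_const. now apply sumR1_le.
Qed.

Lemma sumR1_triangle f n : Rabs (sumR1 f n) <= sumR1 (fun j => Rabs (f j)) n.
Proof.
  induction n; simpl; [rewrite Rabs_R0; lra|].
  eapply Rle_trans; [apply Rabs_triang|lra].
Qed.

Lemma sumR1_diff_ge f m n lo :
  (m <= n)%nat -> (forall j, (m < j <= n)%nat -> lo <= f j) ->
  (INR n - INR m) * lo <= sumR1 f n - sumR1 f m.
Proof.
  intros Hmn. replace n with (m + (n - m))%nat by lia.
  rewrite plus_INR. generalize (n - m)%nat as k. intros k H.
  induction k as [|k IH]; [rewrite Nat.add_0_r; simpl; lra|].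
  rewrite Nat.add_succ_r, S_INR. simpl sumR1 at 1.
  assert ((INR m + INR k - INR m) * lo <= sumR1 f (m + k) - sumR1 f m)
    by (apply IH; intros; apply H; lia).
  assert (lo <= f (S (m + k))) by (apply H; lia).
  lra.
Qed.

Lemma sumR1_diff_le_diff f g m n :
  (m <= n)%nat -> (forall j, (m < j <= n)%nat -> f j <= g j) ->
  sumR1 f n - sumR1 f m <= sumR1 g n - sumR1 g m.
Proof.
  intros Hmn H.
  pose proof (sumR1_diff_ge (fun j => g j - f j) m n 0 Hmn) as Hd.
  rewrite !sumR1_minus in Hd.
  assert (0 <= sumR1 g n - sumR1 f n - (sumR1 g m - sumR1 f m)).
  { rewrite <- (Rmult_0_r (INR n - INR m)). apply Hd. intros j Hj.
    specialize (H j Hj). lra. }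
  lra.
Qed.

Lemma sumR1_diff_ext f g m n :
  (m <= n)%nat -> (forall j, (m < j <= n)%nat -> f j = g j) ->
  sumR1 f n - sumR1 f m = sumR1 g n - sumR1 g m.
Proof.
  intros Hmn H.
  pose proof (sumR1_diff_le_diff f g m n Hmn ltac:(intros j Hj; rewrite H by lia; lra)).
  pose proof (sumR1_diff_le_diff g f m n Hmn ltac:(intros j Hj; rewrite H by lia; lra)).
  lra.
Qed.

Lemma sumR1_incr f m n :
  (m <= n)%nat -> (forall j, (m < j <= n)%nat -> 0 <= f j) -> sumR1 f m <= sumR1 f n.
Proof.
  intros Hmn H. pose proof (sumR1_diff_ge f m n 0 Hmn H). lra.
Qed.

Lemma sumR1_eps rs g n : (rs <= n)%nat ->
  sumR1 (fun j => eps rs j * g j) n = 2 * sumR1 g rs - sumR1 g n.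
Proof.
  intros H.
  assert (E : sumR1 (fun j => eps rs j * g j) rs = sumR1 g rs).
  { apply sumR1_ext. intros j Hj. unfold eps.
    replace (Nat.leb j rs) with true by (symmetry; apply Nat.leb_le; lia). lra. }
  replace n with (rs + (n - rs))%nat by lia. generalize (n - rs)%nat as k.
  induction k as [|k IH]; [rewrite Nat.add_0_r, E; lra|].
  rewrite Nat.add_succ_r. simpl. rewrite IH. unfold eps.
  replace (Nat.leb (S (rs + k)) rs) with false by (symmetry; apply Nat.leb_gt; lia).
  lra.
Qed.

Lemma sumR1_split_first f n : (1 <= n)%nat ->
  sumR1 f n = f 1%nat + sumR1 (fun j => if Nat.eqb j 1 then 0 else f j) n.
Proof.
  intros H. induction n as [|[|n] IH]; [lia|simpl; lra|].
  cbn [sumR1] in *. rewrite IH by lia. simpl. lra.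
Qed.

Lemma sum_inv_sq_diff_le m n : (1 <= m <= n)%nat ->
  sumR1 (fun j => / INR j ^ 2) n - sumR1 (fun j => / INR j ^ 2) m <= / INR m - / INR n.
Proof.
  intros Hmn. replace n with (m + (n - m))%nat by lia. generalize (n - m)%nat as k.
  induction k as [|k IH]; [rewrite Nat.add_0_r; lra|].
  rewrite Nat.add_succ_r. cbn [sumR1]. rewrite S_INR.
  assert (1 <= INR (m + k)) by (apply (le_INR 1); lia).
  set (x := INR (m + k)) in *.
  assert (/ (x + 1) ^ 2 <= / x - / (x + 1)).
  { replace (/ x - / (x + 1)) with (/ (x * (x + 1))) by (field; lra).
    apply Rinv_le_contravar; nra. }
  lra.
Qed.

(** * h on the unit circle and the region G_a *)

Definition coef (rs : nat) (lam : R) (j : nat) : R := eps rs j * dcoef lam j.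

Definition cos_sum (r rs : nat) (lam th : R) : R :=
  sumR1 (fun j => coef rs lam j * cos (INR j * th)) r.

Definition sin_sum (r rs : nat) (lam th : R) : R :=
  sumR1 (fun j => coef rs lam j * sin (INR j * th)) r.

Lemma cexpi_pow th j : Cpow (cexpi th) j = cexpi (INR j * th).
Proof.
  induction j as [|j IH].
  - unfold cexpi. simpl. rewrite Rmult_0_l, cos_0, sin_0. reflexivity.
  - change (Cpow (cexpi th) (S j)) with (Cmult (cexpi th) (Cpow (cexpi th) j)).
    rewrite IH, S_INR. unfold cexpi, Cmult. cbn [fst snd].
    replace ((INR j + 1) * th) with (INR j * th + th) by ring.
    rewrite cos_plus, sin_plus. f_equal; ring.
Qed.

Lemma sumC1_cexpi (u : nat -> R) th n :
  sumC1 (fun j => Cmult (RtoC (u j)) (Cpow (cexpi th) j)) n =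
  (sumR1 (fun j => u j * cos (INR j * th)) n, sumR1 (fun j => u j * sin (INR j * th)) n).
Proof.
  induction n as [|n IH]; [reflexivity|].
  cbn [sumC1 sumR1]. rewrite IH, cexpi_pow.
  unfold Cplus, Cmult, cexpi, RtoC. simpl. f_equal; ring.
Qed.

Lemma htilde_cexpi r rs lam tlam th :
  htilde r rs lam tlam (cexpi th) = (tlam * cos_sum r rs lam th, tlam * sin_sum r rs lam th).
Proof.
  unfold htilde. rewrite (sumC1_cexpi (coef rs lam)).
  unfold Cmult, RtoC, cos_sum, sin_sum, coef. simpl. f_equal; ring.
Qed.

Lemma hfun_cexpi a r rs lam tlam th :
  hfun a r rs lam tlam (cexpi th) =
  ((1 - a ^ 10) * tlam * cos_sum r rs lam th, (1 - a ^ 10) * tlam * sin_sum r rs lam th).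
Proof.
  unfold hfun. rewrite htilde_cexpi. unfold Cmult, RtoC. simpl. f_equal; ring.
Qed.

Lemma htilde_one r rs lam tlam :
  htilde r rs lam tlam (RtoC 1) = RtoC 1 -> tlam * sumR1 (coef rs lam) r = 1.
Proof.
  intros H.
  assert (E : RtoC 1 = cexpi 0) by (unfold cexpi; rewrite cos_0, sin_0; reflexivity).
  rewrite E in H at 1. rewrite htilde_cexpi in H. injection H as H _.
  rewrite <- H. f_equal. unfold cos_sum. apply sumR1_ext. intros. rewrite Rmult_0_r, cos_0. ring.
Qed.

Lemma trig_sum_sq_le (u phi : nat -> R) n :
  (sumR1 (fun j => u j * cos (phi j)) n) ^ 2 + (sumR1 (fun j => u j * sin (phi j)) n) ^ 2
  <= (sumR1 (fun j => Rabs (u j)) n) ^ 2.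
Proof.
  induction n as [|n IH]; [simpl; lra|]. cbn [sumR1].
  set (A := sumR1 (fun j => u j * cos (phi j)) n) in *.
  set (B := sumR1 (fun j => u j * sin (phi j)) n) in *.
  set (M := sumR1 (fun j => Rabs (u j)) n) in *.
  assert (HM : 0 <= M) by (apply sumR1_nonneg; intros; apply Rabs_pos).
  set (v := u (S n)). set (c := cos (phi (S n))). set (s := sin (phi (S n))).
  assert (Hcs : c ^ 2 + s ^ 2 = 1)
    by (pose proof (sin2_cos2 (phi (S n))); unfold Rsqr in *; unfold c, s; lra).
  (* Lagrange's identity bounds the component of (A, B) along (c, s) by M *)
  assert (Hproj : Rabs (A * c + B * s) <= M).
  { assert ((A * c + B * s) ^ 2 + (A * s - B * c) ^ 2 = (A ^ 2 + B ^ 2) * (c ^ 2 + s ^ 2))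
      by ring.
    pose proof (pow2_ge_0 (A * s - B * c)).
    assert ((A * c + B * s) ^ 2 <= M ^ 2) by nra.
    apply Rabs_le; split; nra. }
  assert (v * (A * c + B * s) <= Rabs v * M).
  { eapply Rle_trans; [apply Rle_abs|]. rewrite Rabs_mult.
    apply Rmult_le_compat_l; [apply Rabs_pos|exact Hproj]. }
  assert (v ^ 2 = Rabs v ^ 2) by (rewrite pow2_abs; auto).
  replace ((A + v * c) ^ 2 + (B + v * s) ^ 2)
    with (A ^ 2 + B ^ 2 + 2 * (v * (A * c + B * s)) + v ^ 2 * (c ^ 2 + s ^ 2)) by ring.
  nra.
Qed.

Lemma Arg_pos_re w : 0 < fst w -> Arg w = atan (snd w / fst w).
Proof.
  intros H. unfold Arg. destruct (Rlt_dec 0 (Re w)); [reflexivity|]. unfold Re in n. lra.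
Qed.

Lemma atan_between_half a p q : 0 < a < 1 -> 0 < p ->
  sin (a / 2) * p < cos (a / 2) * q -> cos a * q < sin a * p ->
  a / 2 < atan (q / p) < a.
Proof.
  intros Ha Hp Hlo Hhi. pose proof PI2_1.
  assert (0 < cos (a / 2)) by (apply cos_gt_0; lra).
  assert (0 < cos a) by (apply cos_gt_0; lra).
  split.
  - rewrite <- (atan_tan (a / 2)) by lra. apply atan_increasing. unfold tan.
    apply (Rmult_lt_reg_r (cos (a / 2) * p)); [nra|].
    replace (sin (a / 2) / cos (a / 2) * (cos (a / 2) * p)) with (sin (a / 2) * p)
      by (field; lra).
    replace (q / p * (cos (a / 2) * p)) with (cos (a / 2) * q) by (field; lra). lra.
  - rewrite <- (atan_tan a) by lra. apply atan_increasing. unfold tan.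
    apply (Rmult_lt_reg_r (cos a * p)); [nra|].
    replace (sin a / cos a * (cos a * p)) with (sin a * p) by (field; lra).
    replace (q / p * (cos a * p)) with (cos a * q) by (field; lra). lra.
Qed.

(* With u = x - cos a and rho = 1 - |z|^2, the quotient defining G_a is a positive
   multiple of (2 u cos a + rho) + i (2 u sin a): its argument is below a iff rho > 0
   and above a/2 iff rho < 2 u. *)
Lemma G_of_lens a x y : 0 < a < 1 ->
  0 < 1 - (x ^ 2 + y ^ 2) -> 1 - (x ^ 2 + y ^ 2) < 2 * (x - cos a) -> G a (x, y).
Proof.
  intros Ha Hrho Hu. pose proof PI2_1.
  set (c := cos a) in *. set (s := sin a).
  assert (0 < c) by (apply cos_gt_0; unfold c; lra).
  assert (0 < s) by (apply sin_gt_0; unfold s; lra).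
  assert (0 < sin (a / 2)) by (apply sin_gt_0; lra).
  assert (Hcs : s ^ 2 + c ^ 2 = 1)
    by (pose proof (sin2_cos2 a); unfold Rsqr in *; unfold s, c; lra).
  assert (Hcsh : sin (a / 2) ^ 2 + cos (a / 2) ^ 2 = 1)
    by (pose proof (sin2_cos2 (a / 2)); unfold Rsqr in *; lra).
  assert (Es : s = 2 * sin (a / 2) * cos (a / 2))
    by (unfold s; rewrite <- sin_2a; f_equal; field).
  assert (Ec : c = 1 - 2 * sin (a / 2) * sin (a / 2))
    by (unfold c; rewrite <- cos_2a_sin; f_equal; field).
  set (u := x - c) in *. set (rho := 1 - (x ^ 2 + y ^ 2)) in *.
  assert (0 < u) by lra.
  set (den := u ^ 2 + (y + s) ^ 2).
  assert (0 < den) by (unfold den; pose proof (pow2_ge_0 (y + s)); nra).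
  assert (HRe : s ^ 2 - y ^ 2 - u ^ 2 = 2 * c * u + rho) by (unfold u, rho; nra).
  assert (Hw : Cdiv (Cminus (cexpi a) (x, y)) (Cminus (x, y) (cexpi (- a)))
               = ((2 * c * u + rho) / den, 2 * s * u / den)).
  { rewrite <- HRe. unfold Cdiv, Cminus, Cmult, Cinv, Cplus, Copp, cexpi. simpl.
    rewrite cos_neg, sin_neg. fold c s.
    f_equal; unfold den, u; field; fold u den; lra. }
  assert (Hin : x ^ 2 + y ^ 2 < 1) by (unfold rho in Hrho; lra).
  split; [|split].
  - unfold cexpi. rewrite cos_neg, sin_neg. intros E. injection E as E1 E2.
    fold c s in E1, E2. rewrite E1, E2 in Hin. nra.
  - unfold cexpi. intros E. injection E as E1 E2.
    fold c s in E1, E2. rewrite E1, E2 in Hin. nra.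
  - rewrite Hw, Arg_pos_re by (apply Rdiv_lt_0_compat; simpl; nra). simpl.
    replace (2 * s * u / den / ((2 * c * u + rho) / den)) with (2 * s * u / (2 * c * u + rho))
      by (field; split; nra).
    apply atan_between_half; [exact Ha|nra| |fold c s; nra].
    assert (E : cos (a / 2) * (2 * s * u) - sin (a / 2) * (2 * c * u + rho)
                = sin (a / 2) * (2 * u - rho)).
    { rewrite Es, Ec.
      transitivity (sin (a / 2) * (4 * u * (sin (a / 2) ^ 2 + cos (a / 2) ^ 2) - 2 * u - rho));
        [ring|rewrite Hcsh; ring]. }
    nra.
Qed.

(** * Logarithmic estimates and the position of r_* *)

Lemma ln_le_sub1 x : 0 < x -> ln x <= x - 1.
Proof.
  intros H. rewrite <- (ln_exp (x - 1)). apply ln_le; [exact H|].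
  pose proof (exp_ineq1_le (x - 1)). lra.
Qed.

Lemma ln_le_of_le_exp x y : 0 < x -> x <= exp y -> ln x <= y.
Proof. intros. rewrite <- (ln_exp y). now apply ln_le. Qed.

Lemma ln_ge_1 x : 3 <= x -> 1 <= ln x.
Proof.
  intros H. rewrite <- (ln_exp 1). apply ln_le; [apply exp_pos|]. pose proof exp_le_3. lra.
Qed.

Lemma ln_INR_add3_ge_1 j : 1 <= ln (INR j + 3).
Proof. apply ln_ge_1. pose proof (pos_INR j). lra. Qed.

Lemma ln4_bounds : 1 <= ln 4 <= 2.
Proof.
  split; [apply ln_ge_1; lra|]. apply ln_le_of_le_exp; [lra|].
  replace 2 with (1 + 1) by lra. rewrite exp_plus.
  pose proof (exp_ineq1_le 1). nra.
Qed.

Lemma ln_le_of_le_pow2 y n : 0 < y -> y <= 2 ^ n -> ln y <= INR n.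
Proof.
  intros Hy Hn. apply ln_le_of_le_exp; [exact Hy|].
  enough (2 ^ n <= exp (INR n)) by lra. clear.
  induction n as [|n IH]; [simpl; rewrite exp_0; lra|].
  rewrite S_INR, exp_plus. simpl pow. pose proof (exp_ineq1_le 1). pose proof (pow_le 2 n).
  nra.
Qed.

Lemma dcoef_pos lam j : 0 < lam -> (1 <= j)%nat -> 0 < dcoef lam j.
Proof.
  intros. unfold dcoef. assert (1 <= INR j) by (apply (le_INR 1); lia).
  pose proof (ln_INR_add3_ge_1 j).
  apply Rdiv_lt_0_compat; [lra|]. apply Rmult_lt_0_compat; apply pow_lt; lra.
Qed.

Lemma sum_inv_sq_le_2 n : sumR1 (fun j => / INR j ^ 2) n <= 2.
Proof.
  destruct n as [|n]; [simpl; lra|].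
  pose proof (sum_inv_sq_diff_le 1 (S n) ltac:(lia)) as H.
  assert (0 < / INR (S n)) by (apply Rinv_0_lt_compat, lt_0_INR; lia).
  assert (E : sumR1 (fun j => / INR j ^ 2) 1 = 1) by (simpl; field).
  assert (E1 : / INR 1 = 1) by (simpl; field). lra.
Qed.

Lemma lam_bounds lam r : 0 < lam -> (1 <= r)%nat -> sumR1 (dcoef lam) r = 1 ->
  1 / 2 <= lam <= ln 4 ^ 2.
Proof.
  intros Hl Hr Hs. pose proof ln4_bounds.
  set (g := fun j => / (INR j ^ 2 * ln (INR j + 3) ^ 2)).
  assert (Hg : forall j, (1 <= j)%nat -> 0 < g j).
  { intros j Hj. unfold g. pose proof (ln_INR_add3_ge_1 j).
    assert (1 <= INR j) by (apply (le_INR 1); lia).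
    apply Rinv_0_lt_compat, Rmult_lt_0_compat; apply pow_lt; lra. }
  assert (E : sumR1 (dcoef lam) r = lam * sumR1 g r).
  { rewrite <- sumR1_scal. apply sumR1_ext. intros j Hj. unfold dcoef, g. field.
    pose proof (ln_INR_add3_ge_1 j). assert (1 <= INR j) by (apply (le_INR 1); lia).
    split; lra. }
  assert (Hlo : / ln 4 ^ 2 <= sumR1 g r).
  { replace (/ ln 4 ^ 2) with (sumR1 g 1)
      by (unfold g; simpl; replace (1 + 3) with 4 by lra; field; lra).
    apply sumR1_incr; [exact Hr|]. intros j Hj. apply Rlt_le, Hg. lia. }
  assert (Hhi : sumR1 g r <= 2).
  { eapply Rle_trans; [|apply (sum_inv_sq_le_2 r)]. apply sumR1_le. intros j Hj.
    unfold g. pose proof (ln_INR_add3_ge_1 j). assert (1 <= INR j) by (apply (le_INR 1); lia).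
    apply Rinv_le_contravar; [apply pow_lt; lra|].
    rewrite <- (Rmult_1_r (INR j ^ 2)) at 1.
    apply Rmult_le_compat_l; [apply pow_le; lra|nra]. }
  assert (Hinv : 0 < / ln 4 ^ 2) by (apply Rinv_0_lt_compat; nra).
  split; [nra|].
  assert (lam * / ln 4 ^ 2 <= 1) by nra.
  apply (Rmult_le_reg_r (/ ln 4 ^ 2)); [exact Hinv|]. rewrite Rinv_r by nra. lra.
Qed.

Lemma inv_j_ln_sq_step x : 1 <= x ->
  / ((x + 1) * ln (x + 4) ^ 2) <= 5 / 2 * (/ ln (x + 3) - / ln (x + 4)).
Proof.
  intros Hx.
  assert (HA : 1 <= ln (x + 3)) by (apply ln_ge_1; lra).
  assert (HAB : ln (x + 3) <= ln (x + 4)) by (apply ln_le; lra).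
  assert (Hstep : / (x + 4) <= ln (x + 4) - ln (x + 3)).
  { pose proof (ln_le_sub1 ((x + 3) / (x + 4)) ltac:(apply Rdiv_lt_0_compat; lra)) as H.
    rewrite ln_div in H by lra.
    replace ((x + 3) / (x + 4) - 1) with (- / (x + 4)) in H by (field; lra). lra. }
  set (A := ln (x + 3)) in *. set (B := ln (x + 4)) in *.
  replace (/ A - / B) with ((B - A) / (A * B)) by (field; lra).
  apply Rle_trans with (5 / 2 * (/ (x + 4) / (B * B))).
  - replace (/ ((x + 1) * B ^ 2)) with (/ (x + 1) * / (B * B)) by (field; lra).
    replace (5 / 2 * (/ (x + 4) / (B * B))) with (5 / 2 / (x + 4) * / (B * B))
      by (field; lra).
    apply Rmult_le_compat_r; [apply Rlt_le, Rinv_0_lt_compat; nra|].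
    apply (Rmult_le_reg_r ((x + 1) * (x + 4))); [nra|].
    replace (/ (x + 1) * ((x + 1) * (x + 4))) with (x + 4) by (field; lra).
    replace (5 / 2 / (x + 4) * ((x + 1) * (x + 4))) with (5 / 2 * (x + 1)) by (field; lra).
    lra.
  - apply Rmult_le_compat_l; [lra|]. unfold Rdiv.
    apply Rmult_le_compat; [apply Rlt_le, Rinv_0_lt_compat; lra
                           |apply Rlt_le, Rinv_0_lt_compat; nra|lra|].
    apply Rinv_le_contravar; nra.
Qed.

Lemma sum_inv_j_ln_sq_telescope n : (1 <= n)%nat ->
  sumR1 (fun j => / (INR j * ln (INR j + 3) ^ 2)) n
  <= / ln 4 ^ 2 + 5 / 2 * (/ ln 4 - / ln (INR n + 3)).
Proof.
  intros Hn. pose proof ln4_bounds.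
  induction n as [|[|n] IH]; [lia| |].
  - cbn [sumR1]. replace (INR 1 + 3) with 4 by (simpl; lra).
    replace (/ (INR 1 * ln 4 ^ 2)) with (/ ln 4 ^ 2) by (simpl; field; lra). lra.
  - cbn [sumR1] in IH |- *. specialize (IH ltac:(lia)).
    assert (HSn : 1 <= INR (S n)) by (apply (le_INR 1); lia).
    pose proof (inv_j_ln_sq_step (INR (S n)) HSn) as Hst.
    rewrite (S_INR (S n)). replace (INR (S n) + 1 + 3) with (INR (S n) + 4) by ring.
    lra.
Qed.

(* The first moments of the d_j are bounded uniformly in r because
   sum 1 / (j log^2 j) converges. *)
Lemma lam_mul_sum_inv_j_ln_sq_le lam n : 0 < lam -> lam <= ln 4 ^ 2 ->
  lam * (sumR1 (fun j => / (INR j * ln (INR j + 3) ^ 2)) n) ^ 2 <= 49 / 4.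
Proof.
  intros Hl Hl4. pose proof ln4_bounds.
  set (T := sumR1 (fun j => / (INR j * ln (INR j + 3) ^ 2)) n).
  assert (HT0 : 0 <= T).
  { apply sumR1_nonneg. intros j Hj. apply Rlt_le, Rinv_0_lt_compat.
    assert (1 <= INR j) by (apply (le_INR 1); lia). pose proof (ln_INR_add3_ge_1 j).
    apply Rmult_lt_0_compat; nra. }
  assert (HT : T <= / ln 4 ^ 2 + 5 / 2 * / ln 4).
  { assert (0 < / ln 4) by (apply Rinv_0_lt_compat; lra).
    assert (0 < / ln 4 ^ 2) by (apply Rinv_0_lt_compat; nra).
    destruct n as [|n]; [unfold T; cbn [sumR1]; lra|].
    pose proof (sum_inv_j_ln_sq_telescope (S n) ltac:(lia)).
    assert (0 < / ln (INR (S n) + 3))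
      by (apply Rinv_0_lt_compat; pose proof (ln_INR_add3_ge_1 (S n)); lra).
    unfold T. lra. }
  set (l := ln 4) in *.
  assert (T * l <= / l + 5 / 2).
  { replace (/ l + 5 / 2) with ((/ l ^ 2 + 5 / 2 * / l) * l) by (field; lra).
    apply Rmult_le_compat_r; lra. }
  assert (/ l <= 1) by (rewrite <- Rinv_1; apply Rinv_le_contravar; lra).
  assert (0 <= T * l <= 7 / 2) by (split; [nra|lra]).
  assert (lam * T ^ 2 <= (T * l) ^ 2) by (replace ((T * l) ^ 2) with (l ^ 2 * T ^ 2) by ring;
                                          apply Rmult_le_compat_r; nra).
  nra.
Qed.

Definition Slog (n : nat) : R := sumR1 (fun j => / ln (INR j + 3) ^ 2) n.

Lemma Slog_le_INR n : Slog n <= INR n.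
Proof.
  unfold Slog. rewrite <- (Rmult_1_r (INR n)), <- sumR1_const. apply sumR1_le.
  intros j _. pose proof (ln_INR_add3_ge_1 j).
  rewrite <- Rinv_1. apply Rinv_le_contravar; nra.
Qed.

Lemma Slog_le_split n T : 0 <= T -> Slog n <= T + INR n / ln (T + 3) ^ 2.
Proof.
  intros HT. assert (HlT : 1 <= ln (T + 3)) by (apply ln_ge_1; lra).
  assert (0 < ln (T + 3) ^ 2) by nra.
  induction n as [|n IH]; [unfold Slog; simpl; unfold Rdiv; lra|].
  destruct (Rle_dec (INR (S n)) T) as [Hle|Hgt].
  - pose proof (Slog_le_INR (S n)).
    assert (0 <= INR (S n) / ln (T + 3) ^ 2) by (apply Rdiv_le_0_compat; [apply pos_INR|lra]).
    lra.
  - unfold Slog in *. cbn [sumR1].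
    assert (/ ln (INR (S n) + 3) ^ 2 <= / ln (T + 3) ^ 2).
    { apply Rinv_le_contravar; [lra|].
      assert (ln (T + 3) <= ln (INR (S n) + 3)) by (apply ln_le; lra). nra. }
    unfold Rdiv in *.
    replace (INR (S n) * / ln (T + 3) ^ 2) with (INR n * / ln (T + 3) ^ 2 + / ln (T + 3) ^ 2)
      by (rewrite S_INR; ring).
    lra.
Qed.

Lemma Slog_diff_ge m n : (m <= n)%nat ->
  INR n - INR m <= ln (INR n + 3) ^ 2 * (Slog n - Slog m).
Proof.
  intros Hmn. pose proof (ln_INR_add3_ge_1 n).
  assert (Hdiv : (INR n - INR m) * / ln (INR n + 3) ^ 2 <= Slog n - Slog m).
  { unfold Slog. apply sumR1_diff_ge; [exact Hmn|]. intros j Hj.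
    pose proof (ln_INR_add3_ge_1 j).
    assert (ln (INR j + 3) <= ln (INR n + 3)).
    { apply ln_le; [pose proof (pos_INR j); lra|].
      assert (INR j <= INR n) by (apply le_INR; lia). lra. }
    apply Rinv_le_contravar; nra. }
  replace (INR n - INR m)
    with (ln (INR n + 3) ^ 2 * ((INR n - INR m) * / ln (INR n + 3) ^ 2)) by (field; nra).
  apply Rmult_le_compat_l; [nra|exact Hdiv].
Qed.

Lemma tail_mass_le lam rs r : 0 < lam -> (1 <= rs <= r)%nat ->
  sumR1 (dcoef lam) r - sumR1 (dcoef lam) rs <= lam / ln (INR rs + 4) ^ 2 * / INR rs.
Proof.
  intros Hl Hr. set (K := lam / ln (INR rs + 4) ^ 2).
  assert (Hln : 1 <= ln (INR rs + 4)) by (apply ln_ge_1; pose proof (pos_INR rs); lra).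
  assert (HK : 0 <= K) by (unfold K; apply Rdiv_le_0_compat; [lra|nra]).
  eapply Rle_trans.
  - apply (sumR1_diff_le_diff _ (fun j => K * / INR j ^ 2)); [lia|]. intros j Hj.
    assert (INR rs + 1 <= INR j) by (rewrite <- S_INR; apply le_INR; lia).
    assert (ln (INR rs + 4) <= ln (INR j + 3))
      by (apply ln_le; pose proof (pos_INR rs); lra).
    unfold dcoef, K, Rdiv. rewrite Rinv_mult.
    rewrite (Rmult_comm (/ INR j ^ 2)), Rmult_assoc.
    apply Rmult_le_compat_l; [lra|]. apply Rmult_le_compat_r.
    + apply Rlt_le, Rinv_0_lt_compat. pose proof (pos_INR rs). nra.
    + apply Rinv_le_contravar; nra.
  - rewrite !sumR1_scal, <- Rmult_minus_distr_l. apply Rmult_le_compat_l; [exact HK|].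
    pose proof (sum_inv_sq_diff_le rs r ltac:(lia)).
    assert (0 < / INR r) by (apply Rinv_0_lt_compat, lt_0_INR; lia).
    lra.
Qed.

Lemma eighth_root x : 0 <= x -> exists s, 0 <= s /\ x = s ^ 8.
Proof.
  intros Hx. exists (sqrt (sqrt (sqrt x))). split; [apply sqrt_pos|].
  replace (sqrt (sqrt (sqrt x)) ^ 8)
    with (Rsqr (Rsqr (Rsqr (sqrt (sqrt (sqrt x)))))) by (unfold Rsqr; ring).
  rewrite !Rsqr_sqrt; auto using sqrt_pos.
Qed.

Lemma r_of_bounds a : 0 < a -> INR (r_of a) <= / sqrt a < INR (r_of a) + 1.
Proof.
  intros Ha. unfold r_of.
  assert (0 < / sqrt a) by (apply Rinv_0_lt_compat, sqrt_lt_R0, Ha).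
  destruct (base_Int_part (/ sqrt a)) as [H1 H2].
  assert (Hz : (0 <= Int_part (/ sqrt a))%Z).
  { assert (Hm1 : IZR (-1) < IZR (Int_part (/ sqrt a))) by lra. apply lt_IZR in Hm1. lia. }
  rewrite INR_IZR_INZ, Z2Nat.id by exact Hz. lra.
Qed.

(* With T = R^(1/2) in Slog_le_split, the balance condition on r_* forces
   r - r_* <= 16 r_* + O(R^(1/2) log^2 R). *)
Lemma rstar_large R r rs : 2 ^ 40 <= R -> INR r <= R < INR r + 1 -> (rs <= r)%nat ->
  Slog r - Slog rs <= Slog rs -> R / 34 <= INR rs.
Proof.
  intros HR [Hr1 Hr2] Hrs Hbal.
  destruct (eighth_root R) as [s [Hs0 ER]]; [lra|]. subst R.
  assert (Hs32 : 32 <= s).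
  { destruct (Rle_dec 32 s) as [|Hlt]; [assumption|].
    assert (s ^ 7 <= 32 ^ 7) by (apply pow_incr; lra).
    assert (s ^ 8 < 32 ^ 8) by (change (s * s ^ 7 < 32 * 32 ^ 7); nra). lra. }
  set (m := ln s).
  assert (Hm1 : 1 <= m) by (apply ln_ge_1; lra).
  assert (Hms : m <= s - 1) by (apply ln_le_sub1; lra).
  assert (Hup : Slog rs <= s ^ 4 + INR rs / (16 * m ^ 2)).
  { eapply Rle_trans; [apply (Slog_le_split rs (s ^ 4)); apply pow_le; lra|].
    assert (4 * m <= ln (s ^ 4 + 3)).
    { replace (4 * m) with (ln (s ^ 4)) by (rewrite ln_pow by lra; simpl; unfold m; ring).
      apply ln_le; [apply pow_lt; lra|lra]. }
    apply Rplus_le_compat_l. unfold Rdiv. apply Rmult_le_compat_l; [apply pos_INR|].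
    apply Rinv_le_contravar; nra. }
  assert (Hlow : INR r - INR rs <= (16 * m) ^ 2 * (Slog r - Slog rs)).
  { eapply Rle_trans; [apply Slog_diff_ge; exact Hrs|].
    assert (Hlr : ln (INR r + 3) <= 16 * m).
    { replace (16 * m) with (ln (s ^ 16)) by (rewrite ln_pow by lra; simpl; unfold m; ring).
      apply ln_le; [pose proof (pos_INR r); lra|].
      replace (s ^ 16) with (s ^ 8 * s ^ 8) by ring.
      assert (1 <= s ^ 8) by (apply pow_R1_Rle; lra). nra. }
    assert (Slog rs <= Slog r).
    { apply sumR1_incr; [exact Hrs|]. intros j _.
      pose proof (ln_INR_add3_ge_1 j). apply Rlt_le, Rinv_0_lt_compat. nra. }
    pose proof (ln_INR_add3_ge_1 r).
    apply Rmult_le_compat_r; [lra|]. nra. }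
  assert (Hm2 : 256 * m ^ 2 * s ^ 4 <= 256 * s ^ 6).
  { assert (m ^ 2 <= s ^ 2) by nra. assert (0 <= s ^ 4) by (apply pow_le; lra).
    replace (s ^ 6) with (s ^ 2 * s ^ 4) by ring. nra. }
  assert (256 * s ^ 6 + 1 <= s ^ 8 / 2).
  { assert (1 <= s ^ 6) by (apply pow_R1_Rle; lra).
    replace (s ^ 8) with (s ^ 2 * s ^ 6) by ring. nra. }
  assert ((16 * m) ^ 2 * (Slog r - Slog rs) <= 256 * m ^ 2 * s ^ 4 + 16 * INR rs).
  { apply Rle_trans with ((16 * m) ^ 2 * (s ^ 4 + INR rs / (16 * m ^ 2))).
    - apply Rmult_le_compat_l; [nra|lra].
    - right. field. lra. }
  lra.
Qed.

(** * Near t = 0 *)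

Lemma cos_taylor_bounds x : Rabs x <= 1 -> 1 - x ^ 2 / 2 <= cos x <= 1 - x ^ 2 / 2 + x ^ 4 / 24.
Proof.
  intros H. pose proof PI2_1. apply Rabs_le_between in H.
  destruct (cos_bound x 0) as [H1 H2]; try lra.
  unfold cos_approx, cos_term in H1, H2. simpl in H1, H2. split; nra.
Qed.

Lemma sin_taylor_bound_pos x : 0 <= x <= 1 -> Rabs (sin x - x) <= x ^ 3 / 6.
Proof.
  intros H. pose proof PI2_1.
  destruct (sin_bound x 0) as [H1 H2]; try lra.
  unfold sin_approx, sin_term in H1, H2. simpl in H1, H2.
  assert (0 <= x ^ 5 <= x ^ 3).
  { split; [apply pow_le; lra|]. replace (x ^ 5) with (x ^ 3 * x ^ 2) by ring.
    assert (0 <= x ^ 3) by (apply pow_le; lra). assert (x ^ 2 <= 1) by nra. nra. }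
  apply Rabs_le. nra.
Qed.

Lemma sin_taylor_bound x : Rabs x <= 1 -> Rabs (sin x - x) <= Rabs x ^ 3 / 6.
Proof.
  intros H. destruct (Rle_dec 0 x).
  - rewrite (Rabs_right x) in * by lra. apply sin_taylor_bound_pos; lra.
  - rewrite (Rabs_left x) in * by lra.
    replace (sin x - x) with (- (sin (- x) - - x)) by (rewrite sin_neg; ring).
    rewrite Rabs_Ropp. apply sin_taylor_bound_pos; lra.
Qed.

Lemma coef_abs rs lam j : 0 < lam -> (1 <= j)%nat -> Rabs (coef rs lam j) = dcoef lam j.
Proof.
  intros Hl Hj. pose proof (dcoef_pos lam j Hl Hj). unfold coef, eps.
  rewrite Rabs_mult, (Rabs_right (dcoef lam j)) by lra.
  destruct (Nat.leb j rs); [rewrite Rabs_R1|rewrite Rabs_left by lra]; ring.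
Qed.

Lemma coef_head rs lam j : (j <= rs)%nat -> coef rs lam j = dcoef lam j.
Proof.
  intros. unfold coef, eps. replace (Nat.leb j rs) with true by (symmetry; now apply Nat.leb_le).
  ring.
Qed.

Lemma sum_dcoef_mul_pow_le lam r k : 0 < lam ->
  sumR1 (fun j => dcoef lam j * INR j ^ (S (S k))) r <= lam * INR r ^ (S k).
Proof.
  intros Hl. replace (lam * INR r ^ S k) with (INR r * (lam * INR r ^ k)) by (simpl; ring).
  rewrite <- sumR1_const. apply sumR1_le. intros j Hj.
  assert (1 <= INR j <= INR r) by (split; [apply (le_INR 1)|apply le_INR]; lia).
  pose proof (ln_INR_add3_ge_1 j).
  assert (0 < INR j ^ k) by (apply pow_lt; lra).
  unfold dcoef.
  replace (lam / (INR j ^ 2 * ln (INR j + 3) ^ 2) * INR j ^ S (S k))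
    with (lam * INR j ^ k / ln (INR j + 3) ^ 2) by (simpl; field; lra).
  apply Rle_trans with (lam * INR j ^ k).
  - unfold Rdiv. rewrite <- (Rmult_1_r (lam * INR j ^ k)) at 2.
    apply Rmult_le_compat_l; [nra|]. rewrite <- Rinv_1. apply Rinv_le_contravar; nra.
  - apply Rmult_le_compat_l; [lra|]. apply pow_incr; lra.
Qed.

Lemma second_moment_coef rs lam r : (rs <= r)%nat ->
  sumR1 (fun j => coef rs lam j * INR j ^ 2) r = lam * (2 * Slog rs - Slog r).
Proof.
  intros H. transitivity (sumR1 (fun j => eps rs j * (lam * / ln (INR j + 3) ^ 2)) r).
  - apply sumR1_ext. intros j Hj. unfold coef, dcoef.
    assert (1 <= INR j) by (apply (le_INR 1); lia). pose proof (ln_INR_add3_ge_1 j).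
    field. lra.
  - rewrite sumR1_eps, !sumR1_scal by exact H. unfold Slog. ring.
Qed.

Lemma first_moment_coef_le rs lam r : 0 < lam ->
  Rabs (sumR1 (fun j => coef rs lam j * INR j) r)
  <= lam * sumR1 (fun j => / (INR j * ln (INR j + 3) ^ 2)) r.
Proof.
  intros Hl. eapply Rle_trans; [apply sumR1_triangle|]. rewrite <- sumR1_scal.
  right. apply sumR1_ext. intros j Hj.
  assert (1 <= INR j) by (apply (le_INR 1); lia). pose proof (ln_INR_add3_ge_1 j).
  rewrite Rabs_mult, coef_abs, Rabs_right by (lia || lra). unfold dcoef. field. lra.
Qed.

Lemma cos_sum_taylor r rs lam th : 0 < lam -> INR r * Rabs th <= 1 ->
  Rabs (sumR1 (coef rs lam) r - cos_sum r rs lam th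
        - th ^ 2 / 2 * sumR1 (fun j => coef rs lam j * INR j ^ 2) r)
  <= lam * th ^ 4 * INR r ^ 3 / 24.
Proof.
  intros Hl Hr.
  replace (sumR1 (coef rs lam) r - cos_sum r rs lam th
           - th ^ 2 / 2 * sumR1 (fun j => coef rs lam j * INR j ^ 2) r)
    with (sumR1 (fun j => - coef rs lam j * (cos (INR j * th) - (1 - (INR j * th) ^ 2 / 2))) r).
  2:{ unfold cos_sum. rewrite <- sumR1_scal, <- !sumR1_minus.
      apply sumR1_ext. intros. cbv beta. field. }
  eapply Rle_trans; [apply sumR1_triangle|].
  apply Rle_trans with (sumR1 (fun j => dcoef lam j * INR j ^ 4) r * (th ^ 4 / 24)).
  - rewrite Rmult_comm, <- sumR1_scal. apply sumR1_le. intros j Hj.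
    assert (Hx : Rabs (INR j * th) <= 1).
    { rewrite Rabs_mult, Rabs_right by (apply Rle_ge, pos_INR).
      assert (INR j <= INR r) by (apply le_INR; lia). pose proof (Rabs_pos th). nra. }
    pose proof (cos_taylor_bounds _ Hx).
    rewrite Rabs_mult, Rabs_Ropp, coef_abs, Rabs_right by (lia || lra).
    pose proof (dcoef_pos lam j Hl ltac:(lia)).
    replace ((INR j * th) ^ 4) with (INR j ^ 4 * th ^ 4) in * by ring. nra.
  - pose proof (sum_dcoef_mul_pow_le lam r 2 Hl).
    assert (0 <= th ^ 4) by (replace (th ^ 4) with ((th ^ 2) ^ 2) by ring; apply pow2_ge_0).
    apply Rle_trans with (lam * INR r ^ 3 * (th ^ 4 / 24)); [apply Rmult_le_compat_r; lra|].
    right. field.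
Qed.

Lemma sin_sum_taylor r rs lam th : 0 < lam -> INR r * Rabs th <= 1 ->
  Rabs (sin_sum r rs lam th - th * sumR1 (fun j => coef rs lam j * INR j) r)
  <= lam * Rabs th ^ 3 * INR r ^ 2 / 6.
Proof.
  intros Hl Hr.
  replace (sin_sum r rs lam th - th * sumR1 (fun j => coef rs lam j * INR j) r)
    with (sumR1 (fun j => coef rs lam j * (sin (INR j * th) - INR j * th)) r).
  2:{ unfold sin_sum. rewrite <- sumR1_scal, <- sumR1_minus.
      apply sumR1_ext. intros. cbv beta. ring. }
  eapply Rle_trans; [apply sumR1_triangle|].
  apply Rle_trans with (sumR1 (fun j => dcoef lam j * INR j ^ 3) r * (Rabs th ^ 3 / 6)).
  - rewrite Rmult_comm, <- sumR1_scal. apply sumR1_le. intros j Hj.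
    assert (Hx : Rabs (INR j * th) <= 1).
    { rewrite Rabs_mult, Rabs_right by (apply Rle_ge, pos_INR).
      assert (INR j <= INR r) by (apply le_INR; lia). pose proof (Rabs_pos th). nra. }
    pose proof (sin_taylor_bound _ Hx) as Hsin.
    rewrite Rabs_mult, coef_abs by (lia || lra).
    rewrite Rabs_mult, (Rabs_right (INR j)) in Hsin by (apply Rle_ge, pos_INR).
    pose proof (dcoef_pos lam j Hl ltac:(lia)).
    replace ((INR j * Rabs th) ^ 3) with (INR j ^ 3 * Rabs th ^ 3) in * by ring. nra.
  - pose proof (sum_dcoef_mul_pow_le lam r 1 Hl).
    assert (0 <= Rabs th ^ 3) by (apply pow_le, Rabs_pos).
    apply Rle_trans with (lam * INR r ^ 2 * (Rabs th ^ 3 / 6)); [apply Rmult_le_compat_r; lra|].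
    right. field.
Qed.

(* The second moment sum_j eps_j d_j j^2 = lam (2 Slog r_* - Slog r) lies in
   [20 lam, 21 lam]; this is what the choice of r_* is for. *)
Lemma cos_sum_defect_near_zero r rs lam th :
  0 < lam -> (rs <= r)%nat -> 20 <= 2 * Slog rs - Slog r <= 21 ->
  INR r * Rabs th <= 1 -> th ^ 2 * INR r ^ 3 <= 1 / 100 ->
  999 / 100 * (lam * th ^ 2) <= sumR1 (coef rs lam) r - cos_sum r rs lam th
  <= 11 * (lam * th ^ 2).
Proof.
  intros Hl Hrs Hbal Hr Hth.
  assert (HX := cos_sum_taylor r rs lam th Hl Hr).
  rewrite second_moment_coef in HX by exact Hrs. apply Rabs_le_between in HX.
  set (w := lam * th ^ 2). assert (0 <= w) by (unfold w; pose proof (pow2_ge_0 th); nra).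
  assert (HX4 : lam * th ^ 4 * INR r ^ 3 / 24 <= w / 2400).
  { replace (lam * th ^ 4 * INR r ^ 3 / 24) with (w * (th ^ 2 * INR r ^ 3) / 24)
      by (unfold w; field).
    apply Rle_trans with (w * (1 / 100) / 24); [|right; field].
    unfold Rdiv. apply Rmult_le_compat_r; [lra|]. apply Rmult_le_compat_l; lra. }
  unfold w in *. split; nra.
Qed.

Lemma sin_sum_sq_near_zero r rs lam th :
  0 < lam <= ln 4 ^ 2 -> (1 <= r)%nat ->
  INR r * Rabs th <= 1 -> th ^ 2 * INR r ^ 3 <= 1 / 100 ->
  sin_sum r rs lam th ^ 2 <= 123 / 10 * (lam * th ^ 2).
Proof.
  intros [Hl Hl4] Hr1 Hr Hth. pose proof ln4_bounds. pose proof (Rabs_pos th).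
  set (M1 := sumR1 (fun j => coef rs lam j * INR j) r).
  set (T := sumR1 (fun j => / (INR j * ln (INR j + 3) ^ 2)) r).
  assert (HT := lam_mul_sum_inv_j_ln_sq_le lam r Hl Hl4). fold T in HT.
  assert (HM1 := first_moment_coef_le rs lam r Hl). fold M1 T in HM1.
  assert (HlT : lam * T <= 7).
  { assert ((lam * T) ^ 2 <= 49)
      by (replace ((lam * T) ^ 2) with (lam * (lam * T ^ 2)) by ring; nra).
    pose proof (Rabs_pos M1). nra. }
  assert (HY := sin_sum_taylor r rs lam th Hl Hr). fold M1 in HY.
  assert (HY3 : lam * Rabs th ^ 3 * INR r ^ 2 / 6 <= Rabs th * lam / 600).
  { assert (Rabs th ^ 2 * INR r ^ 2 <= 1 / 100).
    { rewrite pow2_abs. apply Rle_trans with (th ^ 2 * INR r ^ 3); [|exact Hth].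
      apply Rmult_le_compat_l; [apply pow2_ge_0|].
      assert (1 <= INR r) by (apply (le_INR 1); lia). simpl. nra. }
    replace (lam * Rabs th ^ 3 * INR r ^ 2 / 6)
      with (Rabs th * lam * (Rabs th ^ 2 * INR r ^ 2) / 6) by field.
    apply Rle_trans with (Rabs th * lam * (1 / 100) / 6); [|right; field].
    unfold Rdiv. apply Rmult_le_compat_r; [lra|]. apply Rmult_le_compat_l; nra. }
  assert (HYabs : Rabs (sin_sum r rs lam th) <= Rabs th * lam * (T + 1 / 600)).
  { assert (Rabs (th * M1) <= Rabs th * (lam * T))
      by (rewrite Rabs_mult; apply Rmult_le_compat_l; [apply Rabs_pos|exact HM1]).
    pose proof (Rabs_triang_inv (sin_sum r rs lam th) (th * M1)). nra. }
  assert (HB : lam * (T + 1 / 600) ^ 2 <= 123 / 10).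
  { replace (lam * (T + 1 / 600) ^ 2) with (lam * T ^ 2 + lam * T / 300 + lam / 360000)
      by field.
    nra. }
  rewrite <- pow2_abs. apply Rle_trans with ((Rabs th * lam * (T + 1 / 600)) ^ 2).
  - apply pow_incr. split; [apply Rabs_pos|exact HYabs].
  - replace ((Rabs th * lam * (T + 1 / 600)) ^ 2) with (lam * (T + 1 / 600) ^ 2 * (lam * th ^ 2))
      by (rewrite <- (pow2_abs th); ring).
    apply Rmult_le_compat_r; [pose proof (pow2_ge_0 th); nra|exact HB].
Qed.

(* Writing X = P - (P - X), the modulus drops by about 2 (P - X) >= 19.9 lam th^2, more
   than the imaginary part adds back. *)
Lemma trig_sums_near_zero r rs lam th :
  0 < lam <= ln 4 ^ 2 -> (1 <= rs <= r)%nat -> 20 <= 2 * Slog rs - Slog r <= 21 ->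
  99 / 100 <= sumR1 (coef rs lam) r <= 1 ->
  INR r * Rabs th <= 1 -> th ^ 2 * INR r ^ 3 <= 1 / 100 ->
  cos_sum r rs lam th ^ 2 + sin_sum r rs lam th ^ 2 <= sumR1 (coef rs lam) r ^ 2 /\
  sumR1 (coef rs lam) r - cos_sum r rs lam th <= 11 * lam * th ^ 2.
Proof.
  intros Hl Hrs Hbal HP Hr Hth.
  pose proof (cos_sum_defect_near_zero r rs lam th ltac:(lra) ltac:(lia) Hbal Hr Hth) as HPX.
  pose proof (sin_sum_sq_near_zero r rs lam th Hl ltac:(lia) Hr Hth) as HY.
  set (P := sumR1 (coef rs lam) r) in *.
  set (X := cos_sum r rs lam th) in *. set (Y := sin_sum r rs lam th) in *.
  set (w := lam * th ^ 2) in *.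
  split; [|unfold w in HPX; lra].
  assert (Hw : w <= 4 / 100).
  { pose proof ln4_bounds. assert (1 <= INR r ^ 3) by (apply pow_R1_Rle, (le_INR 1); lia).
    assert (th ^ 2 <= 1 / 100) by (pose proof (pow2_ge_0 th); nra).
    unfold w. pose proof (pow2_ge_0 th). nra. }
  replace (X ^ 2 + Y ^ 2) with (P ^ 2 - (P - X) * (2 * P - (P - X)) + Y ^ 2) by ring.
  assert (999 / 100 * w * (3 / 2) <= (P - X) * (2 * P - (P - X)))
    by (apply Rmult_le_compat; lra).
  nra.
Qed.

Lemma G_of_near_one a x y : 0 < a < 1 ->
  x ^ 2 + y ^ 2 < 1 -> 1 - a ^ 2 / 250 <= x -> G a (x, y).
Proof.
  intros Ha Hin Hx. apply G_of_lens; [exact Ha|lra|].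
  assert (Hcos : cos a <= 1 - a ^ 2 / 2 + a ^ 4 / 24)
    by (apply cos_taylor_bounds; rewrite Rabs_right; lra).
  assert (0 < a ^ 2 < 1) by (split; [apply pow_lt|]; nra).
  assert (a ^ 4 <= a ^ 2) by (replace (a ^ 4) with (a ^ 2 * a ^ 2) by ring; nra).
  assert ((1 - a ^ 2 / 250) ^ 2 <= x ^ 2) by (apply pow_incr; nra).
  pose proof (pow2_ge_0 y). nra.
Qed.

(** * Away from t = 0 *)

Lemma trig_sum_sq_shift (u phi : nat -> R) psi n :
  (sumR1 (fun j => u j * cos (phi j - psi)) n) ^ 2
  + (sumR1 (fun j => u j * sin (phi j - psi)) n) ^ 2
  = (sumR1 (fun j => u j * cos (phi j)) n) ^ 2 + (sumR1 (fun j => u j * sin (phi j)) n) ^ 2.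
Proof.
  set (C := sumR1 (fun j => u j * cos (phi j)) n).
  set (S := sumR1 (fun j => u j * sin (phi j)) n).
  assert (EC : sumR1 (fun j => u j * cos (phi j - psi)) n = C * cos psi + S * sin psi).
  { unfold C, S. rewrite <- !(Rmult_comm (cos psi)), <- !(Rmult_comm (sin psi)).
    rewrite <- !sumR1_scal, <- sumR1_plus. apply sumR1_ext. intros.
    rewrite cos_minus. ring. }
  assert (ES : sumR1 (fun j => u j * sin (phi j - psi)) n = S * cos psi - C * sin psi).
  { unfold C, S. rewrite <- !(Rmult_comm (cos psi)), <- !(Rmult_comm (sin psi)).
    rewrite <- !sumR1_scal, <- sumR1_minus. apply sumR1_ext. intros.
    rewrite sin_minus. ring. }
  rewrite EC, ES. pose proof (sin2_cos2 psi) as Hpsi. unfold Rsqr in Hpsi.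
  transitivity ((C ^ 2 + S ^ 2) * (sin psi * sin psi + cos psi * cos psi)); [ring|].
  rewrite Hpsi. ring.
Qed.

Lemma cos_sum_le_defect (u phi : nat -> R) m n r : (m <= n <= r)%nat ->
  (forall j, (m < j <= n)%nat -> 0 <= u j /\ cos (phi j) <= 3 / 4) ->
  sumR1 (fun j => u j * cos (phi j)) r
  <= sumR1 (fun j => Rabs (u j)) r - (sumR1 u n - sumR1 u m) / 4.
Proof.
  intros Hmnr Hblock.
  assert (Hle : forall j, u j * cos (phi j) <= Rabs (u j)).
  { intros j. eapply Rle_trans; [apply Rle_abs|]. rewrite Rabs_mult.
    pose proof (Rabs_pos (u j)). pose proof (COS_bound (phi j)).
    assert (Rabs (cos (phi j)) <= 1) by (apply Rabs_le; lra). nra. }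
  assert (H1 : sumR1 (fun j => u j * cos (phi j)) m <= sumR1 (fun j => Rabs (u j)) m)
    by (apply sumR1_le; intros; apply Hle).
  assert (H2 := sumR1_diff_le_diff (fun j => u j * cos (phi j))
                  (fun j => Rabs (u j) - u j / 4) m n ltac:(lia)).
  assert (H3 := sumR1_diff_le_diff (fun j => u j * cos (phi j)) (fun j => Rabs (u j)) n r
                  ltac:(lia) ltac:(intros; apply Hle)).
  rewrite !sumR1_minus in H2.
  replace (sumR1 (fun j => u j / 4) n) with (sumR1 u n / 4) in H2
    by (unfold Rdiv; rewrite Rmult_comm, <- sumR1_scal; apply sumR1_ext; intros; ring).
  replace (sumR1 (fun j => u j / 4) m) with (sumR1 u m / 4) in H2
    by (unfold Rdiv; rewrite Rmult_comm, <- sumR1_scal; apply sumR1_ext; intros; ring).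
  assert (H2' : sumR1 (fun j => u j * cos (phi j)) n - sumR1 (fun j => u j * cos (phi j)) m
                <= sumR1 (fun j => Rabs (u j)) n - sumR1 u n / 4
                   - (sumR1 (fun j => Rabs (u j)) m - sumR1 u m / 4)).
  { apply H2. intros j Hj. destruct (Hblock j Hj). rewrite Rabs_right by lra. nra. }
  lra.
Qed.

Definition coef_tail (rs : nat) (lam : R) (j : nat) : R :=
  if Nat.eqb j 1 then 0 else coef rs lam j.

Lemma sum_coef_split_first rs lam (g : nat -> R) r : (1 <= rs)%nat -> (1 <= r)%nat ->
  sumR1 (fun j => coef rs lam j * g j) r
  = dcoef lam 1 * g 1%nat + sumR1 (fun j => coef_tail rs lam j * g j) r.
Proof.
  intros Hrs Hr. rewrite sumR1_split_first by exact Hr. cbv beta.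
  rewrite coef_head by exact Hrs. f_equal.
  apply sumR1_ext. intros j _. unfold coef_tail. destruct (Nat.eqb j 1); ring.
Qed.

Lemma sum_abs_coef_tail rs lam r : 0 < lam -> (1 <= r)%nat ->
  sumR1 (fun j => Rabs (coef_tail rs lam j)) r = sumR1 (dcoef lam) r - dcoef lam 1.
Proof.
  intros Hl Hr. rewrite (sumR1_split_first (dcoef lam)) by exact Hr.
  enough (sumR1 (fun j => Rabs (coef_tail rs lam j)) r
          = sumR1 (fun j => if Nat.eqb j 1 then 0 else dcoef lam j) r) by lra.
  apply sumR1_ext. intros j Hj. unfold coef_tail.
  destruct (Nat.eqb j 1); [apply Rabs_R0|apply coef_abs; [exact Hl|lia]].
Qed.

(* Rotating by e^(-i th) makes the j = 1 term real and positive; the mass the other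
   terms lose to cancellation on the block then shows up in the modulus. *)
Lemma trig_sums_far r rs lam th m n :
  0 < lam -> (1 <= m < n)%nat -> (n <= rs <= r)%nat -> sumR1 (dcoef lam) r = 1 ->
  (forall j, (m < j <= n)%nat -> cos (INR j * th - th) <= 3 / 4) ->
  cos_sum r rs lam th ^ 2 + sin_sum r rs lam th ^ 2
  <= 1 - dcoef lam 1 * (sumR1 (dcoef lam) n - sumR1 (dcoef lam) m) / 2.
Proof.
  intros Hl Hmn Hnr Hsum Hcos.
  set (d1 := dcoef lam 1). assert (Hd1 : 0 < d1) by (apply dcoef_pos; auto).
  set (phi := fun j => INR j * th - th).
  set (W := sumR1 (fun j => coef_tail rs lam j * cos (phi j)) r).
  set (Z := sumR1 (fun j => coef_tail rs lam j * sin (phi j)) r).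
  assert (Hrot : cos_sum r rs lam th ^ 2 + sin_sum r rs lam th ^ 2 = (d1 + W) ^ 2 + Z ^ 2).
  { unfold cos_sum, sin_sum.
    rewrite <- (trig_sum_sq_shift (coef rs lam) (fun j => INR j * th) th).
    rewrite !(sum_coef_split_first rs lam (fun j => _ (INR j * th - th))) by lia.
    replace (INR 1 * th - th) with 0 by (simpl; ring).
    rewrite cos_0, sin_0. fold d1. unfold W, Z, phi. f_equal; f_equal; ring. }
  assert (Habs := sum_abs_coef_tail rs lam r Hl ltac:(lia)). rewrite Hsum in Habs. fold d1 in Habs.
  assert (HWZ : W ^ 2 + Z ^ 2 <= (1 - d1) ^ 2) by (rewrite <- Habs; apply trig_sum_sq_le).
  set (D := sumR1 (dcoef lam) n - sumR1 (dcoef lam) m).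
  assert (Htail : forall j, (m < j <= n)%nat -> coef_tail rs lam j = dcoef lam j).
  { intros j Hj. unfold coef_tail.
    replace (Nat.eqb j 1) with false by (symmetry; apply Nat.eqb_neq; lia).
    apply coef_head. lia. }
  assert (HW : W <= 1 - d1 - D / 4).
  { rewrite <- Habs. replace D with (sumR1 (coef_tail rs lam) n - sumR1 (coef_tail rs lam) m)
      by (apply sumR1_diff_ext; [lia|exact Htail]).
    apply cos_sum_le_defect; [lia|]. intros j Hj. rewrite Htail by exact Hj.
    split; [apply Rlt_le, dcoef_pos; [exact Hl|lia]|apply Hcos; exact Hj]. }
  rewrite Hrot.
  replace ((d1 + W) ^ 2 + Z ^ 2) with (d1 ^ 2 + 2 * d1 * W + (W ^ 2 + Z ^ 2)) by ring.
  assert (2 * d1 * W <= 2 * d1 * (1 - d1 - D / 4)) by (apply Rmult_le_compat_l; lra).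
  nra.
Qed.

Lemma dcoef_block_mass_ge lam m n : 0 < lam -> (m <= n)%nat ->
  (INR n - INR m) * (lam / (INR n ^ 2 * ln (INR n + 3) ^ 2))
  <= sumR1 (dcoef lam) n - sumR1 (dcoef lam) m.
Proof.
  intros Hl Hmn. apply sumR1_diff_ge; [exact Hmn|]. intros j Hj.
  assert (1 <= INR j <= INR n) by (split; [apply (le_INR 1)|apply le_INR]; lia).
  pose proof (ln_INR_add3_ge_1 j).
  assert (ln (INR j + 3) <= ln (INR n + 3)) by (apply ln_le; lra).
  unfold dcoef, Rdiv. apply Rmult_le_compat_l; [lra|].
  apply Rinv_le_contravar; [apply Rmult_lt_0_compat; nra|].
  apply Rmult_le_compat; try nra.
Qed.

Lemma dcoef_block_mass_ge_scaled lam m k tau L : 1 / 2 <= lam -> (m < k)%nat -> 0 <= tau ->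
  tau * INR k ^ 2 <= 5 * (INR k - INR m) -> ln (INR k + 3) <= L ->
  tau / (10 * L ^ 2) <= sumR1 (dcoef lam) k - sumR1 (dcoef lam) m.
Proof.
  intros Hl Hmk Htau Hmass HL.
  eapply Rle_trans; [|apply dcoef_block_mass_ge; [lra|lia]].
  assert (Hk : 1 <= INR k) by (apply (le_INR 1); lia).
  assert (INR m < INR k) by (apply lt_INR; lia).
  pose proof (ln_INR_add3_ge_1 k).
  replace ((INR k - INR m) * (lam / (INR k ^ 2 * ln (INR k + 3) ^ 2)))
    with ((INR k - INR m) * lam / INR k ^ 2 / ln (INR k + 3) ^ 2) by (field; nra).
  assert (Hq : tau / 10 <= (INR k - INR m) * lam / INR k ^ 2).
  { apply (Rmult_le_reg_r (INR k ^ 2)); [nra|].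
    replace ((INR k - INR m) * lam / INR k ^ 2 * INR k ^ 2) with ((INR k - INR m) * lam)
      by (field; nra).
    assert ((INR k - INR m) * (1 / 2) <= (INR k - INR m) * lam)
      by (apply Rmult_le_compat_l; lra).
    lra. }
  unfold Rdiv. rewrite Rinv_mult, <- Rmult_assoc.
  apply Rmult_le_compat; [lra|apply Rlt_le, Rinv_0_lt_compat; nra|exact Hq|].
  apply Rinv_le_contravar; [nra|]. apply pow_incr; lra.
Qed.

Lemma dcoef_one_ge lam : 1 / 2 <= lam -> 1 / 8 <= dcoef lam 1.
Proof.
  intros Hl. pose proof ln4_bounds. unfold dcoef.
  replace (INR 1 ^ 2 * ln (INR 1 + 3) ^ 2) with (ln 4 ^ 2)
    by (simpl; replace (1 + 3) with 4 by ring; ring).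
  apply Rle_trans with (1 / 2 / 4); [lra|]. unfold Rdiv.
  apply Rmult_le_compat; [lra|lra|lra|]. apply Rinv_le_contravar; nra.
Qed.

Lemma exists_INR_between x : 0 < x -> exists m : nat, x <= INR m <= x + 1.
Proof.
  intros Hx. destruct (archimed x) as [H1 H2].
  assert (Hz : (0 <= up x)%Z) by (apply le_IZR; lra).
  exists (Z.to_nat (up x)). rewrite INR_IZR_INZ, Z2Nat.id by exact Hz. lra.
Qed.

Lemma cos_le_3_4 x : PI / 4 <= x <= PI -> cos x <= 3 / 4.
Proof.
  intros H. pose proof PI_RGT_0.
  assert (cos (PI / 4) <= 3 / 4).
  { rewrite cos_PI4. assert (4 / 3 < sqrt 2).
    { rewrite <- (sqrt_square (4 / 3)) by lra. apply sqrt_lt_1; lra. }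
    apply (Rmult_le_reg_r (sqrt 2)); [lra|]. field_simplify; lra. }
  destruct (Req_dec x (PI / 4)) as [->|]; [assumption|].
  assert (cos x < cos (PI / 4)) by (apply cos_decreasing_1; lra). lra.
Qed.

Lemma cos_shifted_phase_le t j : PI / 4 <= 2 * PI * (INR j - 1) * Rabs t <= PI ->
  cos (INR j * (2 * PI * t) - 2 * PI * t) <= 3 / 4.
Proof.
  intros H. replace (cos (INR j * (2 * PI * t) - 2 * PI * t))
    with (cos (2 * PI * (INR j - 1) * Rabs t)) by
    (destruct (Rle_dec 0 t); [rewrite Rabs_right by lra|rewrite Rabs_left, <- cos_neg by lra];
     f_equal; ring).
  now apply cos_le_3_4.
Qed.

Lemma phase_block_small t n : 0 < Rabs t < 1 / 16 -> / (4 * Rabs t) + 3 <= INR n ->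
  exists m k, (1 <= m < k)%nat /\ (k <= n)%nat /\
    (forall j, (m < j <= k)%nat -> cos (INR j * (2 * PI * t) - 2 * PI * t) <= 3 / 4) /\
    Rabs t * INR k ^ 2 <= 5 * (INR k - INR m).
Proof.
  intros Ht Hn. set (tau := Rabs t) in *. pose proof PI_RGT_0.
  assert (H8 : 2 <= / (8 * tau)).
  { replace 2 with (/ (1 / 2)) by field. apply Rinv_le_contravar; lra. }
  destruct (exists_INR_between (/ (8 * tau))) as [M HM]; [lra|].
  assert (EM : / (4 * tau) = 2 * / (8 * tau)) by (field; lra).
  assert (HMt : 1 / 8 <= INR M * tau <= 1 / 8 + tau).
  { replace (1 / 8) with (/ (8 * tau) * tau) by (field; lra).
    replace (/ (8 * tau) * tau + tau) with ((/ (8 * tau) + 1) * tau) by ring.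
    split; apply Rmult_le_compat_r; lra. }
  assert (HM1 : (1 <= M)%nat) by (apply INR_le; simpl; lra).
  exists M, (2 * M + 1)%nat.
  assert (Ek : INR (2 * M + 1) = 2 * INR M + 1) by (rewrite plus_INR, mult_INR; simpl; ring).
  split; [lia|split; [apply INR_le; lra|split]].
  - intros j Hj. apply cos_shifted_phase_le.
    assert (INR M + 1 <= INR j <= 2 * INR M + 1)
      by (rewrite <- Ek; rewrite <- S_INR; split; apply le_INR; lia).
    fold tau.
    replace (2 * PI * (INR j - 1) * tau) with (PI * (2 * ((INR j - 1) * tau))) by ring.
    split.
    + replace (PI / 4) with (PI * (1 / 4)) by field. apply Rmult_le_compat_l; nra.
    + rewrite <- (Rmult_1_r PI) at 2. apply Rmult_le_compat_l; nra.
  - rewrite Ek. replace (2 * INR M + 1 - INR M) with (INR M + 1) by ring.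
    assert (4 * tau * (INR M + 1) <= 1) by nra.
    assert (tau * (2 * INR M + 1) ^ 2 <= (INR M + 1) * (4 * tau * (INR M + 1))) by nra.
    nra.
Qed.

Lemma phase_block_exists t n : 0 < Rabs t <= 1 / 2 -> / (4 * Rabs t) + 3 <= INR n ->
  exists m k, (1 <= m < k)%nat /\ (k <= n)%nat /\
    (forall j, (m < j <= k)%nat -> cos (INR j * (2 * PI * t) - 2 * PI * t) <= 3 / 4) /\
    Rabs t * INR k ^ 2 <= 5 * (INR k - INR m).
Proof.
  intros Ht Hn. pose proof PI_RGT_0.
  assert (0 < / (4 * Rabs t)) by (apply Rinv_0_lt_compat; lra).
  assert (Hn3 : (3 <= n)%nat) by (apply INR_le; simpl; lra).
  destruct (Rlt_dec (Rabs t) (1 / 16)) as [Hsmall|Hbig]; [apply phase_block_small; lra|].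
  destruct (Rle_dec (1 / 8) (Rabs t)).
  - exists 1%nat, 2%nat. split; [lia|split; [lia|split]].
    + intros j Hj. replace j with 2%nat by lia. apply cos_shifted_phase_le. simpl. nra.
    + simpl. lra.
  - exists 2%nat, 3%nat. split; [lia|split; [lia|split]].
    + intros j Hj. replace j with 3%nat by lia. apply cos_shifted_phase_le. simpl. nra.
    + simpl. lra.
Qed.

Lemma scaled_modulus_le f tl X Y N D e :
  0 <= f <= 1 -> tl * (1 - 2 * N) = 1 -> 0 <= N <= 1 / 4 ->
  X ^ 2 + Y ^ 2 <= 1 - D -> 0 <= e <= 1 / 2 -> 2 * N + e <= D / 2 ->
  sqrt ((f * tl * X) ^ 2 + (f * tl * Y) ^ 2) <= 1 - e.
Proof.
  intros Hf Htl HN HXY He HD.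
  assert (Htl0 : 0 < tl) by nra.
  assert (Hb : tl * (1 - D / 2) <= 1 - e).
  { apply (Rmult_le_reg_l (1 - 2 * N)); [lra|].
    replace ((1 - 2 * N) * (tl * (1 - D / 2))) with (1 - D / 2)
      by (rewrite <- Rmult_assoc, (Rmult_comm _ tl), Htl; ring).
    nra. }
  rewrite <- (sqrt_pow2 (1 - e)) by lra. apply sqrt_le_1_alt.
  replace ((f * tl * X) ^ 2 + (f * tl * Y) ^ 2) with (f ^ 2 * (tl ^ 2 * (X ^ 2 + Y ^ 2)))
    by ring.
  assert (f ^ 2 <= 1) by nra.
  assert (tl ^ 2 * (X ^ 2 + Y ^ 2) <= (tl * (1 - D / 2)) ^ 2).
  { replace ((tl * (1 - D / 2)) ^ 2) with (tl ^ 2 * (1 - D / 2) ^ 2) by ring.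
    apply Rmult_le_compat_l; [nra|]. nra. }
  assert ((tl * (1 - D / 2)) ^ 2 <= (1 - e) ^ 2) by (apply pow_incr; nra).
  pose proof (pow2_ge_0 X). pose proof (pow2_ge_0 Y). nra.
Qed.

(** * The regime of small a *)

Section SmallA.

Variables (a : R) (rs : nat) (lam tlam : R).
Hypothesis Ha : 0 < a < / 2 ^ 80.
Hypothesis Hrs : (1 <= rs <= r_of a)%nat.
Hypothesis Hbal : 20 <= 2 * Slog rs - Slog (r_of a) <= 21.
Hypothesis Hlam : 0 < lam.
Hypothesis Hsum : sumR1 (dcoef lam) (r_of a) = 1.
Hypothesis Hnorm : tlam * sumR1 (coef rs lam) (r_of a) = 1.

Lemma inv_sqrt_large : 2 ^ 40 <= / sqrt a.
Proof.
  assert (Hs : sqrt a < / 2 ^ 40).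
  { rewrite <- (sqrt_pow2 (/ 2 ^ 40)) by (apply Rlt_le, Rinv_0_lt_compat, pow_lt; lra).
    apply sqrt_lt_1; [lra|apply pow2_ge_0|].
    replace ((/ 2 ^ 40) ^ 2) with (/ 2 ^ 80) by (field; apply pow_nonzero; lra). lra. }
  rewrite <- (Rinv_inv (2 ^ 40)). apply Rlt_le, Rinv_lt_contravar; [|exact Hs].
  apply Rmult_lt_0_compat; [apply sqrt_lt_R0; lra|apply Rinv_0_lt_compat, pow_lt; lra].
Qed.

Lemma ln_inv_eq : ln (/ a) = 2 * ln (/ sqrt a).
Proof.
  pose proof inv_sqrt_large.
  replace (/ a) with (/ sqrt a * / sqrt a) by (rewrite <- Rinv_mult, sqrt_sqrt; lra).
  rewrite ln_mult by lra. ring.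
Qed.

Lemma ln_inv_large : 40 <= ln (/ a).
Proof.
  rewrite ln_inv_eq. pose proof inv_sqrt_large.
  assert (Hl : ln (2 ^ 40) <= ln (/ sqrt a)) by (apply ln_le; [apply pow_lt; lra|lra]).
  rewrite ln_pow in Hl by lra. pose proof ln_lt_2. simpl INR in Hl. lra.
Qed.

Lemma rstar_ge : / sqrt a / 34 <= INR rs.
Proof.
  apply (rstar_large _ (r_of a)); [apply inv_sqrt_large|apply r_of_bounds; lra|lia|lra].
Qed.

Lemma coef_sum_tail :
  sumR1 (coef rs lam) (r_of a) = 1 - 2 * (sumR1 (dcoef lam) (r_of a) - sumR1 (dcoef lam) rs).
Proof. unfold coef. rewrite sumR1_eps by lia. lra. Qed.

(* 2176 = 4 * 4 ^ 2 * 34: lam <= 4, log (r_* + 4) >= log (1/a) / 4 and r_* >= a^(-1/2) / 34. *)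
Lemma tail_le :
  0 <= sumR1 (dcoef lam) (r_of a) - sumR1 (dcoef lam) rs <= 2176 * sqrt a / ln (/ a) ^ 2.
Proof.
  set (R := / sqrt a). set (L := ln (/ a)).
  assert (HR := inv_sqrt_large). fold R in HR. pose proof ln_inv_large as HL. fold L in HL.
  assert (Hq : sqrt a = / R) by (unfold R; rewrite Rinv_inv; reflexivity).
  assert (Hrs34 := rstar_ge). fold R in Hrs34.
  split.
  { assert (sumR1 (dcoef lam) rs <= sumR1 (dcoef lam) (r_of a)); [|lra].
    apply sumR1_incr; [lia|]. intros j Hj. apply Rlt_le, dcoef_pos; [exact Hlam|lia]. }
  eapply Rle_trans; [apply tail_mass_le; [exact Hlam|exact Hrs]|].
  assert (Hlam4 : lam <= 4)
    by (pose proof ln4_bounds; pose proof (lam_bounds lam (r_of a) Hlam ltac:(lia) Hsum); nra).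
  assert (Hln : L / 4 <= ln (INR rs + 4)).
  { assert (EL : L = 2 * ln R) by apply ln_inv_eq.
    assert (H34 : ln 34 <= INR 6) by (apply ln_le_of_le_pow2; simpl; lra). simpl INR in H34.
    assert (Hl : ln (R / 34) <= ln (INR rs + 4)) by (apply ln_le; lra).
    rewrite ln_div in Hl by lra. lra. }
  assert (/ INR rs <= 34 / R).
  { replace (34 / R) with (/ (R / 34)) by (field; lra). apply Rinv_le_contravar; lra. }
  assert (lam / ln (INR rs + 4) ^ 2 <= 64 / L ^ 2).
  { replace (64 / L ^ 2) with (4 / (L / 4) ^ 2) by (field; lra). unfold Rdiv.
    apply Rmult_le_compat; [lra|apply Rlt_le, Rinv_0_lt_compat; nra|lra|].
    apply Rinv_le_contravar; [nra|]. apply pow_incr; lra. }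
  rewrite Hq. apply Rle_trans with (64 / L ^ 2 * (34 / R)); [|right; field; split; lra].
  apply Rmult_le_compat; [apply Rlt_le, Rdiv_lt_0_compat; [lra|]|apply Rlt_le, Rinv_0_lt_compat|
                          assumption|assumption].
  - pose proof (ln_INR_add3_ge_1 rs). assert (ln (INR rs + 3) <= ln (INR rs + 4))
      by (apply ln_le; pose proof (pos_INR rs); lra). nra.
  - apply lt_0_INR. lia.
Qed.

Lemma coef_sum_bounds : 99 / 100 <= sumR1 (coef rs lam) (r_of a) <= 1.
Proof.
  rewrite coef_sum_tail. pose proof tail_le as [HN0 HN].
  pose proof inv_sqrt_large. pose proof ln_inv_large.
  assert (Hq : sqrt a <= / 2 ^ 40).
  { rewrite <- (Rinv_inv (sqrt a)). apply Rinv_le_contravar; [apply pow_lt; lra|lra]. }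
  assert (2176 * sqrt a / ln (/ a) ^ 2 <= 1 / 200).
  { apply Rle_trans with (2176 * / 2 ^ 40 / 1); [|lra]. unfold Rdiv.
    apply Rmult_le_compat; [pose proof (sqrt_pos a); lra|apply Rlt_le, Rinv_0_lt_compat; nra|lra|].
    rewrite <- Rinv_1. apply Rinv_le_contravar; nra. }
  lra.
Qed.

Lemma a_small : a < 1 /\ 0 < a ^ 10 <= a ^ 2 / 1000.
Proof.
  assert (/ 2 ^ 80 <= / 1000) by (apply Rinv_le_contravar; lra).
  assert (Ha1 : a < 1) by lra. split; [exact Ha1|].
  assert (0 <= a ^ 7 <= 1) by (split; [apply pow_le|rewrite <- (pow1 7); apply pow_incr]; lra).
  assert (a ^ 8 <= / 1000) by (replace (a ^ 8) with (a * a ^ 7) by ring; nra).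
  split; [apply pow_lt; lra|]. replace (a ^ 10) with (a ^ 2 * a ^ 8) by ring.
  pose proof (pow2_ge_0 a). unfold Rdiv. apply Rmult_le_compat_l; lra.
Qed.

Lemma tlam_bounds : 0 < tlam <= 100 / 99.
Proof.
  pose proof coef_sum_bounds. set (P := sumR1 (coef rs lam) (r_of a)) in *.
  assert (0 < tlam) by nra. split; [assumption|].
  apply (Rmult_le_reg_r P); [lra|]. rewrite Hnorm. lra.
Qed.

Lemma near_one_angle_bounds t : Rabs t <= a / 1000 ->
  INR (r_of a) * Rabs (2 * PI * t) <= 1 /\ (2 * PI * t) ^ 2 * INR (r_of a) ^ 3 <= 1 / 100 /\
  (2 * PI * t) ^ 2 <= 64 * a ^ 2 / 10 ^ 6.
Proof.
  intros Ht. pose proof PI_4. pose proof PI_RGT_0.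
  set (R := / sqrt a). assert (HR := inv_sqrt_large). fold R in HR.
  assert (Hr : 0 <= INR (r_of a) <= R) by (split; [apply pos_INR|apply r_of_bounds; lra]).
  assert (EaR : R * a = sqrt a) by (unfold R; rewrite <- (sqrt_sqrt a) at 2 by lra;
                                    field; apply Rgt_not_eq, sqrt_lt_R0; lra).
  assert (Hq : R * sqrt a = 1) by (unfold R; field; apply Rgt_not_eq, sqrt_lt_R0; lra).
  assert (Hq40 : sqrt a <= / 2 ^ 40).
  { rewrite <- (Rinv_inv (sqrt a)). apply Rinv_le_contravar; [apply pow_lt; lra|exact HR]. }
  assert (Hth : Rabs (2 * PI * t) <= 8 * a / 1000).
  { rewrite !Rabs_mult, (Rabs_right 2), (Rabs_right PI) by lra. pose proof (Rabs_pos t). nra. }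
  assert (Hth2 : (2 * PI * t) ^ 2 <= 64 * a ^ 2 / 10 ^ 6).
  { rewrite <- pow2_abs. replace (64 * a ^ 2 / 10 ^ 6) with ((8 * a / 1000) ^ 2) by field.
    apply pow_incr. split; [apply Rabs_pos|exact Hth]. }
  split; [|split; [|exact Hth2]].
  - apply Rle_trans with (R * (8 * a / 1000)).
    + apply Rmult_le_compat; [lra|apply Rabs_pos|lra|exact Hth].
    + replace (R * (8 * a / 1000)) with (8 * (R * a) / 1000) by field. rewrite EaR.
      assert (/ 2 ^ 40 <= 1) by (rewrite <- Rinv_1; apply Rinv_le_contravar; lra). lra.
  - apply Rle_trans with (64 * a ^ 2 / 10 ^ 6 * R ^ 3).
    + apply Rmult_le_compat; [apply pow2_ge_0|apply pow_le; lra|exact Hth2|apply pow_incr; lra].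
    + replace (64 * a ^ 2 / 10 ^ 6 * R ^ 3) with (64 * (R * a) ^ 2 * R / 10 ^ 6) by field.
      rewrite EaR. replace (64 * sqrt a ^ 2 * R / 10 ^ 6) with (64 * sqrt a * (R * sqrt a) / 10 ^ 6)
        by field.
      rewrite Hq. assert (/ 2 ^ 40 <= 1) by (rewrite <- Rinv_1; apply Rinv_le_contravar; lra).
      lra.
Qed.

Lemma h_in_G_near_one t : Rabs t <= a / 1000 ->
  G a (hfun a (r_of a) rs lam tlam (cexpi (2 * PI * t))).
Proof.
  intros Ht. set (th := 2 * PI * t).
  destruct (near_one_angle_bounds t Ht) as [H1 [H2 H3]]. fold th in H1, H2, H3.
  pose proof coef_sum_bounds as HP. set (P := sumR1 (coef rs lam) (r_of a)) in *.
  destruct (lam_bounds lam (r_of a) Hlam ltac:(lia) Hsum) as [Hl1 Hl4].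
  destruct (trig_sums_near_zero (r_of a) rs lam th ltac:(lra) Hrs Hbal HP H1 H2) as [HQ HPX].
  fold P in HQ, HPX.
  set (X := cos_sum (r_of a) rs lam th) in *. set (Y := sin_sum (r_of a) rs lam th) in *.
  destruct a_small as [Ha1 Ha10]. destruct tlam_bounds as [Htl0 Htl].
  assert (HtX : 1 - 3 * a ^ 2 / 1000 <= tlam * X).
  { replace (tlam * X) with (1 - tlam * (P - X)) by (rewrite <- Hnorm; fold P; ring).
    assert (Hl : tlam * lam <= 100 / 99 * 4)
      by (pose proof ln4_bounds; apply Rmult_le_compat; nra).
    assert (tlam * (P - X) <= 11 * (tlam * lam) * th ^ 2).
    { replace (11 * (tlam * lam) * th ^ 2) with (tlam * (11 * lam * th ^ 2)) by ring.
      apply Rmult_le_compat_l; lra. }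
    assert (11 * (tlam * lam) * th ^ 2 <= 11 * (100 / 99 * 4) * th ^ 2)
      by (apply Rmult_le_compat_r; [apply pow2_ge_0|lra]).
    lra. }
  rewrite hfun_cexpi. fold th X Y. apply G_of_near_one; [lra| |].
  - replace (((1 - a ^ 10) * tlam * X) ^ 2 + ((1 - a ^ 10) * tlam * Y) ^ 2)
      with ((1 - a ^ 10) ^ 2 * (tlam ^ 2 * (X ^ 2 + Y ^ 2))) by ring.
    assert (tlam ^ 2 * (X ^ 2 + Y ^ 2) <= 1).
    { replace 1 with (tlam ^ 2 * P ^ 2) by (rewrite <- (pow1 2), <- Hnorm; fold P; ring).
      apply Rmult_le_compat_l; [apply pow2_ge_0|exact HQ]. }
    assert (a ^ 2 < 1) by nra. assert ((1 - a ^ 10) ^ 2 < 1) by nra.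
    pose proof (pow2_ge_0 X). pose proof (pow2_ge_0 Y). nra.
  - replace ((1 - a ^ 10) * tlam * X) with ((1 - a ^ 10) * (tlam * X)) by ring.
    assert (0 <= 3 * a ^ 2 / 1000 <= 1) by (split; nra).
    nra.
Qed.

Lemma phase_block_fits t : 2 ^ 22 * sqrt a < Rabs t -> / (4 * Rabs t) + 3 <= INR rs.
Proof.
  intros Ht. pose proof inv_sqrt_large. pose proof rstar_ge.
  assert (Hq : 0 < sqrt a) by (apply sqrt_lt_R0; lra).
  assert (/ (4 * Rabs t) <= / sqrt a / 2 ^ 24).
  { replace (/ sqrt a / 2 ^ 24) with (/ (4 * (2 ^ 22 * sqrt a))) by (field; lra).
    apply Rinv_le_contravar; [|lra].
    apply Rmult_lt_0_compat; [lra|apply Rmult_lt_0_compat; [apply pow_lt|]; lra]. }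
  lra.
Qed.

Lemma ln_add3_le_ln_inv k : (k <= r_of a)%nat -> ln (INR k + 3) <= ln (/ a).
Proof.
  intros Hk. set (R := / sqrt a). assert (HR := inv_sqrt_large). fold R in HR.
  assert (INR k <= R)
    by (apply Rle_trans with (INR (r_of a)); [apply le_INR; lia|apply r_of_bounds; lra]).
  apply ln_le; [pose proof (pos_INR k); lra|].
  replace (/ a) with (R * R) by (unfold R; rewrite <- Rinv_mult, sqrt_sqrt; lra). nra.
Qed.

Lemma trig_sums_far_from_zero t : 2 ^ 22 * sqrt a < Rabs t <= 1 / 2 ->
  cos_sum (r_of a) rs lam (2 * PI * t) ^ 2 + sin_sum (r_of a) rs lam (2 * PI * t) ^ 2
  <= 1 - Rabs t / (160 * ln (/ a) ^ 2).
Proof.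
  intros Ht. pose proof ln_inv_large.
  assert (0 < Rabs t) by (pose proof (sqrt_pos a); assert (0 < 2 ^ 22) by (apply pow_lt; lra);
                          nra).
  destruct (phase_block_exists t rs ltac:(lra) (phase_block_fits t ltac:(lra)))
    as [m [k [Hmk [Hkrs [Hcos Hmass]]]]].
  destruct (lam_bounds lam (r_of a) Hlam ltac:(lia) Hsum) as [Hl1 _].
  pose proof (trig_sums_far (r_of a) rs lam (2 * PI * t) m k Hlam Hmk ltac:(lia) Hsum Hcos).
  pose proof (dcoef_block_mass_ge_scaled lam m k (Rabs t) (ln (/ a)) Hl1 ltac:(lia)
                ltac:(lra) Hmass (ln_add3_le_ln_inv k ltac:(lia))).
  pose proof (dcoef_one_ge lam Hl1).
  set (D := sumR1 (dcoef lam) k - sumR1 (dcoef lam) m) in *.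
  assert (Rabs t / (160 * ln (/ a) ^ 2) <= dcoef lam 1 * D / 2); [|lra].
  replace (Rabs t / (160 * ln (/ a) ^ 2)) with (1 / 8 * (Rabs t / (10 * ln (/ a) ^ 2)) / 2)
    by (field; nra).
  assert (0 <= Rabs t / (10 * ln (/ a) ^ 2)) by (apply Rlt_le, Rdiv_lt_0_compat; nra).
  unfold Rdiv. apply Rmult_le_compat_r; [lra|]. apply Rmult_le_compat; lra.
Qed.

(* This is where C6 = 2^22 comes from: 2176 / 2^22 < 1 / 1000. *)
Lemma tail_le_far t : 2 ^ 22 * sqrt a < Rabs t ->
  sumR1 (dcoef lam) (r_of a) - sumR1 (dcoef lam) rs <= Rabs t / (1000 * ln (/ a) ^ 2).
Proof.
  intros Ht. pose proof ln_inv_large. destruct tail_le as [_ HN].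
  eapply Rle_trans; [exact HN|]. unfold Rdiv.
  replace (Rabs t * / (1000 * ln (/ a) ^ 2)) with (Rabs t / 1000 * / ln (/ a) ^ 2)
    by (field; nra).
  apply Rmult_le_compat_r; [apply Rlt_le, Rinv_0_lt_compat; nra|].
  assert (0 < 2 ^ 22) by (apply pow_lt; lra). pose proof (sqrt_pos a). nra.
Qed.

Lemma h_modulus_far t : -1 / 2 <= t <= 1 / 2 -> ~ (- (2 ^ 22 * sqrt a) <= t <= 2 ^ 22 * sqrt a) ->
  Cmod (hfun a (r_of a) rs lam tlam (cexpi (2 * PI * t))) <= 1 - 1 / 1000 * Rabs t / ln (/ a) ^ 2.
Proof.
  intros Ht Hfar.
  assert (Htau : 2 ^ 22 * sqrt a < Rabs t <= 1 / 2).
  { split; [|apply Rabs_le; lra].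
    destruct (Rle_dec 0 t); [rewrite Rabs_right|rewrite Rabs_left]; lra. }
  pose proof ln_inv_large. destruct a_small as [Ha1 Ha10]. assert (a ^ 2 < 1) by nra.
  pose proof (tail_le_far t ltac:(lra)) as HN.
  pose proof coef_sum_bounds as HP. rewrite coef_sum_tail in HP.
  pose proof Hnorm as Hn. rewrite coef_sum_tail in Hn.
  set (N := sumR1 (dcoef lam) (r_of a) - sumR1 (dcoef lam) rs) in *.
  set (e := Rabs t / ln (/ a) ^ 2).
  assert (0 <= e <= 1 / 2 / 1600).
  { unfold e. split; [apply Rdiv_le_0_compat; [apply Rabs_pos|nra]|].
    unfold Rdiv. apply Rmult_le_compat; [apply Rabs_pos|apply Rlt_le, Rinv_0_lt_compat; nra|
                                         lra|apply Rinv_le_contravar; nra]. }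
  replace (1 / 1000 * Rabs t / ln (/ a) ^ 2) with (e / 1000) by (unfold e; field; nra).
  replace (Rabs t / (1000 * ln (/ a) ^ 2)) with (e / 1000) in HN by (unfold e; field; nra).
  rewrite hfun_cexpi. unfold Cmod. cbn [fst snd].
  apply (scaled_modulus_le _ _ _ _ N (e / 160)); [split; lra|exact Hn|split; lra| |split; lra|lra].
  replace (e / 160) with (Rabs t / (160 * ln (/ a) ^ 2)) by (unfold e; field; nra).
  apply trig_sums_far_from_zero. exact Htau.
Qed.

End SmallA.

Theorem lemma7 :
  exists c4 c5 C6 : R, 0 < c4 /\ 0 < c5 /\ 0 < C6 /\
  exists a0 : R, 0 < a0 /\
  forall a : R, 0 < a < a0 ->
  forall rstar : nat, (1 <= rstar <= r_of a)%nat ->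
  20 <= sumR1 (fun j => / ln (INR j + 3) ^ 2) rstar
        - (sumR1 (fun j => / ln (INR j + 3) ^ 2) (r_of a)
           - sumR1 (fun j => / ln (INR j + 3) ^ 2) rstar) <= 21 ->
  forall lam : R, 0 < lam ->
  sumR1 (fun j => dcoef lam j) (r_of a) = 1 ->
  forall tlam : R, 0 < tlam ->
  htilde (r_of a) rstar lam tlam (RtoC 1) = RtoC 1 ->
  (forall t : R, Rabs t <= c4 * a ->
     G a (hfun a (r_of a) rstar lam tlam (cexpi (2 * PI * t)))) /\
  (forall t : R, -1/2 <= t <= 1/2 -> ~ (- (C6 * sqrt a) <= t <= C6 * sqrt a) ->
     Cmod (hfun a (r_of a) rstar lam tlam (cexpi (2 * PI * t)))
       <= 1 - c5 * Rabs t / ln (/ a) ^ 2).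
Proof.
  exists (1 / 1000), (1 / 1000), (2 ^ 22).
  split; [lra|split; [lra|split; [apply pow_lt; lra|]]].
  exists (/ 2 ^ 80). split; [apply Rinv_0_lt_compat, pow_lt; lra|].
  intros a Ha rs Hrs Hbal lam Hlam Hsum tlam _ Hnorm%htilde_one.
  assert (Hbal' : 20 <= 2 * Slog rs - Slog (r_of a) <= 21) by (unfold Slog; lra).
  split.
  - intros t Ht. apply (h_in_G_near_one a rs lam tlam); auto. lra.
  - intros t Ht Hfar. apply (h_modulus_far a rs lam tlam); auto.
Qed.
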